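(* Let $E$ be a nonempty closed convex subset of a real Hilbert space $H$. Let $f:E\times E\to\mathbb{R}$ be a bifunction satisfying conditions (A1)–(A4) below, and let $S:E\to E$ be a $(\lambda,\gamma)$-generalized hybrid mapping for some $\lambda,\gamma\in\mathbb{R}$, with $F(S)\cap EP(f)\neq\emptyset$. Let $\{r_n\}\subset(0,\infty)$ satisfy $\liminf_{n\to\infty}r_n>0$ and let $\{\beta_n\}$ be a sequence in $[b,1]$ for some $b\in(0,1)$ with $\liminf_{n\to\infty}\beta_n(1-\beta_n)>0$. Let $\{x_n\}$ and $\{u_n\}$ be generated by $x_1=x\in E$ and, for all $n\in\mathbb{N}$, $$u_n\in E \text{ such that } f(u_n,y)+\frac{1}{r_n}\langle y-u_n,u_n-x_n\rangle\ge 0\quad\text{for all } y\in E,$$ $$x_{n+1}=S\big((1-\beta_n)x_n+\beta_n Su_n\big).$$ Then $\{x_n\}$ converges weakly to a point $v\in F(S)\cap EP(f)$, where $v=\lim_{n\to\infty}P_{F(S)\cap EP(f)}(x_n)$.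
   Context: $F(S)=\{x\in E: Sx=x\}$. A mapping $S:E\to E$ is $(\lambda,\gamma)$-generalized hybrid if $\lambda\|Sx-Sy\|^2+(1-\lambda)\|x-Sy\|^2\le \gamma\|Sx-y\|^2+(1-\gamma)\|x-y\|^2$ for all $x,y\in E$. $EP(f)=\{x\in E: f(x,y)\ge 0 \text{ for all } y\in E\}$. Conditions: (A1) $f(x,x)=0$ for all $x\in E$; (A2) $f(x,y)+f(y,x)\le 0$ for all $x,y\in E$; (A3) for all $x,y,z\in E$, $\lim_{t\downarrow 0} f(tz+(1-t)x,y)\le f(x,y)$; (A4) for each $x\in E$, $y\mapsto f(x,y)$ is convex and lower semicontinuous. $P_K$ is the metric projection of $H$ onto a nonempty closed convex set $K$; the limit defining $v$ is in norm. *)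

From HB Require Import structures.
From mathcomp Require Import all_boot all_order all_algebra.
From mathcomp Require Import all_classical all_reals all_analysis.
Set Implicit Arguments. Unset Strict Implicit. Unset Printing Implicit Defensive.
Import Order.TTheory GRing.Theory Num.Theory.
Import numFieldNormedType.Exports.
Local Open Scope classical_set_scope.
Local Open Scope ring_scope.

Section Defs.
Context {R : realType} {V : normedModType R}.

(* ip is a real inner product inducing the norm of V.  Together with
   V : completeNormedModType R this makes V a real Hilbert space. *)
Definition is_inner_product (ip : V -> V -> R) : Prop :=
  (forall x y, ip x y = ip y x) /\
  (forall (a : R) x y z, ip (a *: x + y) z = a * ip x z + ip y z) /\
  (forall x, `|x| ^+ 2 = ip x x).

Definition convex_set_in (E : set V) : Prop :=
  forall x y (t : R), E x -> E y -> 0 <= t <= 1 -> E (t *: x + (1 - t) *: y).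

Definition fixed_points (E : set V) (S : V -> V) : set V :=
  [set x | E x /\ S x = x].

Definition EP (E : set V) (f : V -> V -> R) : set V :=
  [set x | E x /\ forall y, E y -> 0 <= f x y].

Definition generalized_hybrid (E : set V) (S : V -> V) (lam gam : R) : Prop :=
  forall x y, E x -> E y ->
    lam * `|S x - S y| ^+ 2 + (1 - lam) * `|x - S y| ^+ 2
    <= gam * `|S x - y| ^+ 2 + (1 - gam) * `|x - y| ^+ 2.

Definition cond_A1 (E : set V) (f : V -> V -> R) : Prop :=
  forall x, E x -> f x x = 0.
Definition cond_A2 (E : set V) (f : V -> V -> R) : Prop :=
  forall x y, E x -> E y -> f x y + f y x <= 0.
(* lim_{t down 0} f(tz+(1-t)x, y) <= f(x,y), read as limsup *)
Definition cond_A3 (E : set V) (f : V -> V -> R) : Prop :=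
  forall x y z, E x -> E y -> E z ->
    forall eps : R, 0 < eps ->
      \forall t \near 0^'+, f (t *: z + (1 - t) *: x) y <= f x y + eps.
Definition cond_A4 (E : set V) (f : V -> V -> R) : Prop :=
  forall x, E x ->
    (forall y1 y2 (t : R), E y1 -> E y2 -> 0 <= t <= 1 ->
       f x (t *: y1 + (1 - t) *: y2) <= t * f x y1 + (1 - t) * f x y2) /\
    (forall y, E y -> forall eps : R, 0 < eps ->
       \forall y' \near y, E y' -> f x y - eps < f x y').

Definition is_metric_proj (K : set V) (x p : V) : Prop :=
  K p /\ forall q, K q -> `|x - p| <= `|x - q|.

Definition weak_cvg (ip : V -> V -> R) (u : nat -> V) (v : V) : Prop :=
  forall y, (fun n => ip (u n) y) @ \oo --> ip v y.

End Defs.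

(* The iterates are Fejer monotone with respect to C = F(S) /\ EP(f): the
   resolvent step gives |u_n - q|^2 <= |x_n - q|^2 - |u_n - x_n|^2 for q in
   EP(f), S is quasi-nonexpansive, and the convex combination loses a further
   beta_n (1 - beta_n) |x_n - S u_n|^2.  Hence |u_n - x_n| and |x_n - S u_n|
   tend to 0.  Weak cluster points are taken as weak limits along ultrafilters
   (these exist for bounded sequences by compactness of real intervals and the
   Riesz representation); such a limit w lies in F(S) because the hybrid
   inequality makes S demiclosed at 0, and in EP(f) by monotonicity (A2) and
   Minty's lemma.  For a Fejer monotone sequence the projections P_C x_n
   converge strongly, by the variational inequality of the projection, and a
   weak cluster point w in C satisfies <w - v, w - v> <= 0 for v their limit;
   so all weak cluster points equal v and x_n converges weakly to v. *)

From HB Require Import structures.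
From mathcomp Require Import all_boot all_order all_algebra.
From mathcomp Require Import all_classical all_reals all_analysis.
From mathcomp Require Import ring lra.
Import Order.TTheory GRing.Theory Num.Theory.
Import numFieldNormedType.Exports.
Local Open Scope classical_set_scope.
Local Open Scope ring_scope.
Set Implicit Arguments. Unset Strict Implicit. Unset Printing Implicit Defensive.

Lemma sqr_norm_le0 (R : realDomainType) (V : normedModType R) (x : V) :
  `|x| ^+ 2 <= 0 -> x = 0.
Proof. by move=> h; apply/normr0_eq0/eqP; rewrite -sqrf_eq0 eq_le h sqr_ge0. Qed.

Lemma subrBB (V : zmodType) (a c q : V) : a - q - (c - q) = a - c.
Proof. by rewrite opprB addrA subrK. Qed.

Lemma convex_combB (R : pzRingType) (V : lmodType R) (t : R) (a c q : V) :
  t *: (a - q) + (1 - t) *: (c - q) = t *: a + (1 - t) *: c - q.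
Proof. by rewrite !scalerBr addrACA -opprD -scalerDl subrKC scale1r. Qed.

Lemma le0_of_le_mul_small (R : realFieldType) (a b : R) :
  (forall t, 0 < t -> t <= 1 -> a <= t * b) -> a <= 0.
Proof.
move=> h; apply/ler_addgt0Pr => e e0; rewrite add0r.
have b1 : 0 < `|b| + 1 by have := normr_ge0 b; lra.
set t := Order.min 1 (e / (`|b| + 1)).
have t0 : 0 < t by rewrite lt_min ltr01 divr_gt0.
have t1 : t <= 1 by rewrite ge_min lexx.
have te : t * (`|b| + 1) <= e.
  by rewrite -ler_pdivlMr // ge_min lexx orbT.
have := h t t0 t1; have := ler_norm b; nra.
Qed.

Section InnerProduct.
Variables (R : realType) (V : normedModType R) (ip : V -> V -> R).
Hypothesis ip_inner : is_inner_product ip.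

Lemma ipC x y : ip x y = ip y x.
Proof. by case: ip_inner. Qed.

Lemma ipZDl a x y z : ip (a *: x + y) z = a * ip x z + ip y z.
Proof. by case: ip_inner => _ []. Qed.

Lemma sqr_norm_ip x : `|x| ^+ 2 = ip x x.
Proof. by case: ip_inner => _ []. Qed.

Lemma ip0l z : ip 0 z = 0.
Proof. by have := ipZDl 1 0 0 z; rewrite scale1r addr0 mul1r; lra. Qed.

Lemma ipDl x y z : ip (x + y) z = ip x z + ip y z.
Proof. by rewrite -[x]scale1r ipZDl mul1r scale1r. Qed.

Lemma ipZl a x z : ip (a *: x) z = a * ip x z.
Proof. by rewrite -[a *: x]addr0 ipZDl ip0l addr0. Qed.

Lemma ipNl x z : ip (- x) z = - ip x z.
Proof. by rewrite -scaleN1r ipZl mulN1r. Qed.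

Lemma ipBl x y z : ip (x - y) z = ip x z - ip y z.
Proof. by rewrite ipDl ipNl. Qed.

Lemma ip0r z : ip z 0 = 0.
Proof. by rewrite ipC ip0l. Qed.

Lemma ipDr x y z : ip z (x + y) = ip z x + ip z y.
Proof. by rewrite ipC ipDl !(ipC z). Qed.

Lemma ipZr a x z : ip z (a *: x) = a * ip z x.
Proof. by rewrite ipC ipZl ipC. Qed.

Lemma ipNr x z : ip z (- x) = - ip z x.
Proof. by rewrite ipC ipNl ipC. Qed.

Lemma ipBr x y z : ip z (x - y) = ip z x - ip z y.
Proof. by rewrite ipDr ipNr. Qed.

Lemma sqr_normD x y : `|x + y| ^+ 2 = `|x| ^+ 2 + 2 * ip x y + `|y| ^+ 2.
Proof. by rewrite !sqr_norm_ip ipDl !ipDr (ipC y x); ring. Qed.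

Lemma sqr_normB x y : `|x - y| ^+ 2 = `|x| ^+ 2 - 2 * ip x y + `|y| ^+ 2.
Proof. by rewrite sqr_normD ipNr normrN; ring. Qed.

Lemma sqr_normB_split a b c :
  `|a - c| ^+ 2 = `|a - b| ^+ 2 + 2 * ip (a - b) (b - c) + `|b - c| ^+ 2.
Proof. by rewrite -sqr_normD addrA subrK. Qed.

Lemma sqr_norm_convex (t : R) (a c : V) :
  `|t *: a + (1 - t) *: c| ^+ 2 =
  t * `|a| ^+ 2 + (1 - t) * `|c| ^+ 2 - t * (1 - t) * `|a - c| ^+ 2.
Proof.
rewrite sqr_normD sqr_normB !normrZ !exprMn !real_normK ?num_real // ipZl ipZr.
ring.
Qed.

Lemma cauchy_schwarz x y : `|ip x y| <= `|x| * `|y|.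
Proof.
have [->|y0] := eqVneq y 0; first by rewrite ip0r !normr0 mulr0.
have ny : 0 < `|y| ^+ 2 by rewrite exprn_gt0 // normr_gt0.
set t := ip x y / `|y| ^+ 2.
have := sqr_ge0 `|x - t *: y|.
rewrite sqr_normB ipZr normrZ exprMn real_normK ?num_real //.
have -> : `|x| ^+ 2 - 2 * (t * ip x y) + t ^+ 2 * `|y| ^+ 2
        = `|x| ^+ 2 - ip x y ^+ 2 / `|y| ^+ 2 by rewrite /t; field; rewrite normr_eq0.
rewrite subr_ge0 ler_pdivrMr // => h.
by rewrite -ler_sqr ?nnegrE ?mulr_ge0 // real_normK ?num_real // exprMn.
Qed.

End InnerProduct.

Section BoundedLinearForm.
Variables (R : realType) (V : normedModType R) (phi : V -> R) (M : R).
Hypothesis phi_linear : forall a z w, phi (a *: z + w) = a * phi z + phi w.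
Hypothesis phi_bounded : forall z, `|phi z| <= M * `|z|.

Lemma linear_form0 : phi 0 = 0.
Proof. by have := phi_linear 1 0 0; rewrite scale1r addr0 mul1r; lra. Qed.

Lemma linear_formZ a z : phi (a *: z) = a * phi z.
Proof. by rewrite -[a *: z]addr0 phi_linear linear_form0 addr0. Qed.

Lemma linear_formD z w : phi (z + w) = phi z + phi w.
Proof. by rewrite -[z]scale1r phi_linear mul1r scale1r. Qed.

Lemma linear_formB z w : phi (z - w) = phi z - phi w.
Proof. by rewrite -scaleN1r linear_formD linear_formZ mulN1r. Qed.

Lemma bounded_linear_form_continuous : continuous phi.
Proof.
move=> z; apply/cvgrPdist_lt => e e0.
have M1 : 0 < `|M| + 1 by have := normr_ge0 M; lra.
apply: filterS (nbhsx_ballx z (e / (`|M| + 1)) (divr_gt0 e0 M1)) => w.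
rewrite -ball_normE /= -linear_formB => zw.
apply: le_lt_trans (phi_bounded _) _.
have : `|z - w| * (`|M| + 1) < e by rewrite -ltr_pdivlMr.
have := normr_ge0 (z - w); have := ler_norm M; nra.
Qed.

End BoundedLinearForm.

Section QuadraticMinimum.
Variables (R : realType) (V : completeNormedModType R) (ip : V -> V -> R).
Hypothesis ip_inner : is_inner_product ip.
Variables (phi : V -> R) (M : R).
Hypothesis phi_linear : forall a z w, phi (a *: z + w) = a * phi z + phi w.
Hypothesis phi_bounded : forall z, `|phi z| <= M * `|z|.

Let h z := `|z| ^+ 2 - 2 * phi z.

Let h_ge z : - M ^+ 2 <= h z.
Proof.
rewrite /h; have := phi_bounded z; have := ler_norm (phi z).
have := sqr_ge0 (`|z| - M); nra.
Qed.

Let h_continuous : continuous h.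
Proof.
move=> z; apply: cvgB; first by rewrite expr2; apply: cvgM; exact: norm_continuous.
apply: cvgM; first exact: cvg_cst.
exact: bounded_linear_form_continuous phi_linear phi_bounded z.
Qed.

(* The parallelogram law bounds the distance between two almost-minimisers. *)
Let h_midpoint (K : set V) (m : R) a c :
  convex_set_in K -> (forall z, K z -> m <= h z) -> K a -> K c ->
  `|a - c| ^+ 2 <= 2 * (h a + h c) - 4 * m.
Proof.
move=> Kcv hm Ka Kc.
have Kmid : K (2^-1 *: a + (1 - 2^-1) *: c).
  by apply: Kcv => //; apply/andP; split; lra.
have := hm _ Kmid; rewrite /h (sqr_norm_convex ip_inner) phi_linear.
rewrite (linear_formZ phi_linear) (_ : 1 - 2^-1 = 2^-1 :> R); last by field.
lra.
Qed.

Lemma quadratic_min_exists (K : set V) :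
  closed K -> convex_set_in K -> K !=set0 ->
  exists2 w, K w & forall z, K z -> h w <= h z.
Proof.
move=> Kcl Kcv [k0 Kk0].
have hK : has_inf [set h z | z in K].
  by split; [exists (h k0), k0 | exists (- M ^+ 2) => _ [z _ <-]; exact: h_ge].
set m := inf [set h z | z in K].
have hm z : K z -> m <= h z by move=> Kz; apply: ge_inf; [case: hK | exists z].
pose L d := [set z | K z /\ h z < m + d].
pose F := filter_from [set d : R | 0 < d] L.
have FF : ProperFilter F.
  apply: filter_from_proper; last first.
    by move=> d d0; have [_ [z Kz <-] hz] := inf_adherent d0 hK; exists z.
  apply: filter_from_filter; first by exists 1; rewrite /= ltr01.
  move=> i j i0 j0; exists (Order.min i j); first by rewrite /= lt_min i0 j0.
  by move=> z [Kz hz]; split; split => //; apply: (lt_le_trans hz);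
    rewrite lerD2l ge_min lexx ?orbT.
have Fcvg : cvg F.
  apply: cauchy_cvg; apply: cauchy_exP => eps eps0.
  have d0 : 0 < eps ^+ 2 / 4 by rewrite divr_gt0 // exprn_gt0.
  have [_ [z Kz <-] hz] := inf_adherent d0 hK.
  exists z, (eps ^+ 2 / 4) => // a [Ka ha]; rewrite -ball_normE /=.
  have := h_midpoint Kcv hm Kz Ka; have := normr_ge0 (z - a); nra.
have FL d : 0 < d -> F (L d) by exists d.
exists (lim F).
  by apply: (@closed_cvg _ _ F FF id K Kcl) => //; apply: filterS (FL 1 ltr01) => z [].
move=> z Kz; apply: le_trans (hm _ Kz); apply/ler_addgt0Pr => e e0.
have hle : closed [set z | h z <= m + e].
  have := (continuous_closedP h).1 h_continuous.
  by move=> /(_ [set x | x <= m + e]); apply; exact: closed_le.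
apply: (@closed_cvg _ _ F FF id _ hle) => //.
by apply: filterS (FL e e0) => y [_ /ltW].
Qed.

End QuadraticMinimum.

Section MetricProjection.
Variables (R : realType) (V : completeNormedModType R) (ip : V -> V -> R).
Hypothesis ip_inner : is_inner_product ip.

Lemma metric_proj_exists (K : set V) x :
  closed K -> convex_set_in K -> K !=set0 -> exists p, is_metric_proj K x p.
Proof.
move=> Kcl Kcv K0.
have lin a z w : ip x (a *: z + w) = a * ip x z + ip x w.
  by rewrite (ipC ip_inner) (ipZDl ip_inner) !(ipC ip_inner _ x).
have [p Kp hp] := quadratic_min_exists ip_inner lin (cauchy_schwarz ip_inner x)
  Kcl Kcv K0.
exists p; split => // q Kq; have := hp q Kq => pq.
by rewrite -ler_sqr ?nnegrE // !(sqr_normB ip_inner); lra.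
Qed.

Lemma metric_proj_variational (K : set V) x p q :
  convex_set_in K -> is_metric_proj K x p -> K q -> ip (x - p) (q - p) <= 0.
Proof.
move=> Kcv [Kp hp] Kq.
suff : 2 * ip (x - p) (q - p) <= 0 by lra.
apply: (@le0_of_le_mul_small _ _ (`|q - p| ^+ 2)) => t t0 t1.
have e : t *: q + (1 - t) *: p = p + t *: (q - p).
  by rewrite scalerBr scalerBl scale1r addrCA addrA.
have Kt : K (p + t *: (q - p)) by rewrite -e; apply: Kcv => //; rewrite ltW.
have : `|x - p| ^+ 2 <= `|(x - p) - t *: (q - p)| ^+ 2.
  by rewrite ler_sqr ?nnegrE // -addrA -opprD; exact: hp.
rewrite [X in _ <= X](sqr_normB ip_inner) (ipZr ip_inner) normrZ exprMn.
rewrite real_normK ?num_real //; nra.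
Qed.

Lemma metric_proj_unique (K : set V) x p p' :
  convex_set_in K -> is_metric_proj K x p -> is_metric_proj K x p' -> p = p'.
Proof.
move=> Kcv hp hp'.
have h1 := metric_proj_variational Kcv hp (proj1 hp').
have h2 := metric_proj_variational Kcv hp' (proj1 hp).
have e : `|p - p'| ^+ 2 = ip (x - p) (p' - p) + ip (x - p') (p - p').
  rewrite (sqr_norm_ip ip_inner) !(ipBl ip_inner) !(ipBr ip_inner).
  by rewrite !(ipC ip_inner x); ring.
by apply/eqP; rewrite -subr_eq0; apply/eqP/sqr_norm_le0; lra.
Qed.

Lemma riesz_representation (phi : V -> R) M :
  (forall a z w, phi (a *: z + w) = a * phi z + phi w) ->
  (forall z, `|phi z| <= M * `|z|) ->
  exists w, forall z, phi z = ip w z.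
Proof.
move=> lin bnd.
have [w _ hw] := quadratic_min_exists ip_inner lin bnd closedT
  (fun _ _ _ _ _ _ => I) (ex_intro _ 0 I).
exists w.
suff le z : phi z - ip w z <= 0.
  move=> z; have := le z; have := le (- z).
  by rewrite -[- z]scaleN1r (linear_formZ lin) (ipZr ip_inner); lra.
suff : 2 * (phi z - ip w z) <= 0 by lra.
apply: (@le0_of_le_mul_small _ _ (`|z| ^+ 2)) => t t0 t1.
have := hw (w + t *: z) I.
rewrite (sqr_normD ip_inner) (linear_formD lin) (linear_formZ lin) (ipZr ip_inner).
rewrite normrZ exprMn real_normK ?num_real //; nra.
Qed.

End MetricProjection.

Definition bounded_seq (R : realType) (a : nat -> R) := exists M, forall n, `|a n| <= M.

Section BoundedSeq.
Variable R : realType.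
Implicit Types a b : nat -> R.

Lemma bounded_seqD a b : bounded_seq a -> bounded_seq b -> bounded_seq (fun n => a n + b n).
Proof.
move=> [M hM] [N hN]; exists (M + N) => n.
by apply: le_trans (ler_normD _ _) _; apply: lerD.
Qed.

Lemma bounded_seqZ (c : R) a : bounded_seq a -> bounded_seq (fun n => c * a n).
Proof. by move=> [M hM]; exists (`|c| * M) => n; rewrite normrM ler_wpM2l. Qed.

Lemma bounded_seq_cst (c : R) : bounded_seq (fun _ => c).
Proof. by exists `|c|. Qed.

End BoundedSeq.

Lemma cvg0_norm_le (R : realType) (a c : nat -> R) :
  (forall n, `|a n| <= c n) -> c n @[n --> \oo] --> 0 -> a n @[n --> \oo] --> 0.
Proof.
move=> ac c0; apply: (@squeeze_cvgr _ _ _ _ (fun n => - c n) c).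
- by apply: nearW => n; rewrite -ler_norml.
- by rewrite -oppr0; exact: cvgN.
- exact: c0.
Qed.

Lemma cvg0_sqr_le (R : realType) (e c : nat -> R) :
  (forall n, 0 <= e n) -> c n @[n --> \oo] --> 0 ->
  (\forall n \near \oo, e n ^+ 2 <= c n) -> e n @[n --> \oo] --> 0.
Proof.
move=> e0 c0 ec; apply/cvgrPdist_lt => eps eps0.
have eps2 : 0 < eps ^+ 2 by rewrite exprn_gt0.
apply: filterS2 (cvgr_lt _ c0 _ eps2) ec => n cn ecn.
by rewrite sub0r normrN ger0_norm // -ltr_sqr ?nnegrE ?(ltW eps0) //; lra.
Qed.

Lemma limn_einf_gt0_lbound (R : realType) (a : nat -> R) :
  (0 < limn_einf (fun n => (a n)%:E))%E ->
  exists2 k : R, 0 < k & \forall n \near \oo, k <= a n.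
Proof.
rewrite limn_einf_lim (cvg_lim _ (@cvg_einfs_sup R _)) //.
move=> /ereal_sup_gt [_ [N _ <-]].
have lb n : (N <= n)%N -> (einfs (fun n => (a n)%:E) N <= (a n)%:E)%E.
  by move=> Nn; apply: ereal_inf_lbound; exists n.
case: (einfs _ N) lb => [k| |] lb k0 //.
- exists k; first by rewrite -lte_fin.
  by exists N => // n /= Nn; rewrite -lee_fin; exact: lb.
- exists 1; first exact: ltr01.
  by exists N => // n /= Nn; have := lb n Nn; rewrite leye_eq.
Qed.

Section Ultralimit.
Variables (R : realType) (U : set_system nat).
Hypotheses (U_ultra : UltraFilter U) (U_tail : \oo `<=` U).
Implicit Types a b c : nat -> R.

Definition ulim a := lim (a n @[n --> U]).

Lemma ulim_cvg a : bounded_seq a -> a n @[n --> U] --> ulim a.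
Proof.
move=> [M hM].
have aU : U (a @^-1` `[- M, M]%classic).
  by apply: nearW => n /=; rewrite in_itv /= -ler_norml.
have aF : ProperFilter (a n @[n --> U]) by apply: fmap_proper_filter.
have [l [_ cl]] := @segment_compact R (- M) M _ aF aU.
suff al : a n @[n --> U] --> l by apply: cvgP al.
move=> B Bl; have [//|UC] := in_ultra_setVsetC (a @^-1` B) U_ultra.
by have [y [yC yB]] := cl (~` B) _ UC Bl.
Qed.

Lemma ulim_cvgn a l : a n @[n --> \oo] --> l -> ulim a = l.
Proof. by move=> al; apply: cvg_lim => // B /al; exact: U_tail. Qed.

Lemma ulim_cst (c : R) : ulim (fun _ => c) = c.
Proof. by apply: ulim_cvgn; exact: cvg_cst. Qed.

Lemma ulimD a b : bounded_seq a -> bounded_seq b ->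
  ulim (fun n => a n + b n) = ulim a + ulim b.
Proof. by move=> ha hb; apply: cvg_lim => //; apply: cvgD; exact: ulim_cvg. Qed.

Lemma ulimZ (k : R) a : bounded_seq a -> ulim (fun n => k * a n) = k * ulim a.
Proof.
move=> ha; apply: cvg_lim => //; apply: cvgM; [exact: cvg_cst | exact: ulim_cvg].
Qed.

Lemma ulim_le a b : bounded_seq a -> bounded_seq b ->
  (\forall n \near \oo, a n <= b n) -> ulim a <= ulim b.
Proof.
move=> ha hb ab; apply: ler_lim; last exact: U_tail.
  exact: cvgP (ulim_cvg ha).
exact: cvgP (ulim_cvg hb).
Qed.

Lemma ulim_le0 a c : bounded_seq a ->
  (\forall n \near \oo, a n <= c n) -> c n @[n --> \oo] --> 0 -> ulim a <= 0.
Proof.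
move=> ha ac c0; apply/ler_addgt0Pr => e e0; rewrite add0r -(ulim_cst e).
apply: ulim_le => //; first exact: bounded_seq_cst.
apply: (filterS2 _ _ ac (@cvgr_lt _ _ _ _ _ _ c0 _ e0)) => n an /ltW.
exact: le_trans.
Qed.

Lemma normr_ulim_le a M : (forall n, `|a n| <= M) -> `|ulim a| <= M.
Proof.
move=> hM; have ha : bounded_seq a by exists M.
have hM' n : - M <= a n <= M by rewrite -ler_norml.
rewrite ler_norml; apply/andP; split.
  rewrite -(ulim_cst (- M)); apply: ulim_le => //; first exact: bounded_seq_cst.
  by apply: nearW => n; case/andP: (hM' n).
rewrite -(ulim_cst M); apply: ulim_le => //; first exact: bounded_seq_cst.
by apply: nearW => n; case/andP: (hM' n).
Qed.

End Ultralimit.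

(* A bounded sequence all of whose ultralimits agree converges: otherwise an
   ultrafilter concentrated on the indices far from the limit gives a contradiction. *)
Lemma cvg_of_ulim (R : realType) (a : nat -> R) (l : R) : bounded_seq a ->
  (forall U, UltraFilter U -> \oo `<=` U -> ulim U a = l) ->
  a n @[n --> \oo] --> l.
Proof.
move=> ha hU; apply/cvgrPdist_lt => eps eps0; apply: contrapT => hn.
pose A := [set n | ~ (`|l - a n| < eps)].
have freq N : exists n, (N <= n)%N /\ A n.
  apply: contrapT => hN; apply: hn; exists N => // n /= Nn.
  by apply: contrapT => An; apply: hN; exists n.
pose G := filter_from setT (fun N => [set n | (N <= n)%N /\ A n]).
have GF : ProperFilter G.
  apply: filter_from_proper => [|N _]; last by have [n] := freq N; exists n.
  apply: filter_from_filter; first by exists 0%N.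
  move=> i j _ _; exists (maxn i j) => // n [Nn An].
  by split; split => //; apply: leq_trans Nn; rewrite ?leq_maxl ?leq_maxr.
have [U [U_ultra GU]] := ultraFilterLemma GF.
have U_tail : \oo `<=` U.
  by move=> P [N _ hP]; apply: GU; exists N => // n [Nn _]; exact: hP.
have UA : U A by apply: GU; exists 0%N => // n [].
have al := ulim_cvg U_ultra ha; rewrite hU // in al.
have [n [An aln]] := filter_ex (filterI UA (cvgr_dist_lt _ _ al _ eps0)).
exact: An.
Qed.

Section WeakUltralimit.
Variables (R : realType) (V : completeNormedModType R) (ip : V -> V -> R).
Hypothesis ip_inner : is_inner_product ip.
Variable U : set_system nat.
Hypotheses (U_ultra : UltraFilter U) (U_tail : \oo `<=` U).

Definition weak_ulim (x : nat -> V) (w : V) :=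
  forall y, ulim U (fun n => ip (x n) y) = ip w y.

Lemma bounded_seq_ip (x : nat -> V) B z : (forall n, `|x n| <= B) ->
  bounded_seq (fun n => ip (x n) z).
Proof.
move=> xB; exists (B * `|z|) => n.
by apply: le_trans (cauchy_schwarz ip_inner _ _) _; rewrite ler_wpM2r.
Qed.

(* Weak sequential compactness of bounded sets, through the Riesz representation. *)
Lemma weak_ulim_exists (x : nat -> V) B : (forall n, `|x n| <= B) ->
  exists w, weak_ulim x w.
Proof.
move=> xB; have bx z := bounded_seq_ip z xB.
apply: (@riesz_representation _ _ _ ip_inner _ B) => [a z w|z].
  rewrite -(ulimZ U_ultra a (bx z)) -(ulimD U_ultra (bounded_seqZ a (bx z)) (bx w)).
  congr ulim; apply: funext => n.
  by rewrite (ipC ip_inner) (ipZDl ip_inner) !(ipC ip_inner (x n)).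
apply: (normr_ulim_le U_ultra U_tail) => n.
by apply: le_trans (cauchy_schwarz ip_inner _ _) _; rewrite ler_wpM2r.
Qed.

Lemma weak_ulim_closed_convex (K : set V) (z : nat -> V) B w :
  closed K -> convex_set_in K -> (forall n, `|z n| <= B) ->
  (\forall n \near \oo, K (z n)) -> weak_ulim z w -> K w.
Proof.
move=> Kcl Kcv zB zK zw.
have [n Kzn] := filter_ex zK.
have [p pw] := metric_proj_exists ip_inner w Kcl Kcv (ex_intro _ _ Kzn).
suff -> : w = p by case: pw.
have : ulim U (fun n => ip (z n) (w - p) - ip p (w - p)) <= ulim U (fun=> 0).
  apply: (ulim_le U_ultra U_tail).
  - by apply: bounded_seqD; [exact: bounded_seq_ip zB | exact: bounded_seq_cst].
  - exact: bounded_seq_cst.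
  apply: filterS zK => m Kzm.
  by rewrite -(ipBl ip_inner) (ipC ip_inner); exact: metric_proj_variational pw Kzm.
rewrite (ulimD U_ultra (bounded_seq_ip _ zB) (bounded_seq_cst _)) zw.
rewrite !(ulim_cst U_ultra U_tail) -(ipBl ip_inner) -(sqr_norm_ip ip_inner).
by move/sqr_norm_le0/eqP; rewrite subr_eq0 => /eqP.
Qed.

Lemma weak_ulim_cvg0 (x u : nat -> V) B w :
  (forall n, `|x n| <= B) -> (forall n, `|u n| <= B) ->
  (fun n => `|u n - x n|) @ \oo --> 0 -> weak_ulim x w -> weak_ulim u w.
Proof.
move=> xB uB ux0 xw y; rewrite -xw.
have uxB n : `|u n - x n| <= B + B by apply: le_trans (ler_normB _ _) _; exact: lerD.
rewrite [LHS](_ : _ = ulim U (fun n => ip (x n) y + ip (u n - x n) y)); last first.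
  by congr ulim; apply: funext => n; rewrite (ipBl ip_inner) addrC subrK.
rewrite (ulimD U_ultra (bounded_seq_ip _ xB) (bounded_seq_ip _ uxB)).
have -> : ulim U (fun n => ip (u n - x n) y) = 0.
  apply: (ulim_cvgn U_ultra U_tail).
  apply: (@cvg0_norm_le _ _ (fun n => `|u n - x n| * `|y|)).
    by move=> n; exact: cauchy_schwarz.
  by rewrite -(mul0r `|y|); apply: cvgM => //; exact: cvg_cst.
by rewrite addr0.
Qed.

End WeakUltralimit.

Section FejerMonotone.
Variables (R : realType) (V : completeNormedModType R) (ip : V -> V -> R).
Hypothesis ip_inner : is_inner_product ip.
Variables (C : set V) (x : nat -> V).
Hypotheses (C_closed : closed C) (C_convex : convex_set_in C) (C_nonempty : C !=set0).
Hypothesis x_fejer : forall q n, C q -> `|x n.+1 - q| <= `|x n - q|.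

Lemma fejer_le q n m : C q -> (n <= m)%N -> `|x m - q| <= `|x n - q|.
Proof.
move=> Cq /subnK <-; elim: (m - n)%N => [|k IH]; first by rewrite add0n.
by rewrite addSn; apply: le_trans (x_fejer _ Cq) IH.
Qed.

Lemma fejer_bounded : exists B, forall n, `|x n| <= B.
Proof.
have [q Cq] := C_nonempty; exists (`|x 0%N - q| + `|q|) => n.
apply: le_trans (_ : _ <= `|x n - q| + `|q|) _.
  by rewrite -{1}(subrK q (x n)) ler_normD.
by rewrite lerD2r; exact: fejer_le (leq0n n).
Qed.

(* The distances [d(x_n, C)] decrease, and [|p_m - p_n|^2 <= d(x_n, C)^2 - d(x_m, C)^2]. *)
Lemma metric_proj_fejer_cvg (p : nat -> V) :
  (forall n, is_metric_proj C (x n) (p n)) -> cvg (p n @[n --> \oo]).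
Proof.
move=> xp; pose d n := `|x n - p n| ^+ 2.
have dp n m : (n <= m)%N -> d m <= `|x m - p n| ^+ 2 <= d n.
  move=> nm; rewrite !ler_sqr ?nnegrE //.
  have Cpn := proj1 (xp n).
  by apply/andP; split; [exact: (proj2 (xp m)) | exact: fejer_le].
have d_noninc : {homo d : n m / (n <= m)%N >-> m <= n}.
  by move=> n m /dp /andP[]; exact: le_trans.
have d_cvg : cvgn d.
  by apply: nonincreasing_is_cvgn => //; exists 0 => _ [n _ <-]; exact: sqr_ge0.
have d_ge := nonincreasing_cvgn_ge d_noninc d_cvg.
have pp n m : (n <= m)%N -> `|p m - p n| ^+ 2 <= d n - d m.
  move=> nm; have := metric_proj_variational ip_inner C_convex (xp m) (proj1 (xp n)).
  have := sqr_normB_split ip_inner (x m) (p m) (p n).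
  rewrite -[p n - p m]opprB (ipNr ip_inner); have := dp _ _ nm; rewrite /d; lra.
apply: cauchy_cvg; apply: cauchy_exP => eps eps0.
have lim_lt : limn d < limn d + eps ^+ 2 by rewrite ltrDl exprn_gt0.
have [N _ dN] := cvgr_lt _ d_cvg _ lim_lt.
exists (p N), N => // m /= Nm; rewrite -ball_normE /= distrC.
rewrite -ltr_sqr ?nnegrE ?(ltW eps0) //.
by have := pp _ _ Nm; have := d_ge m; have := dN N (leqnn N); lra.
Qed.

(* As [v] lies in [C], [|x_n - p_n| <= |x_n - v|], so
   [<x_n - v, w - v> <= <x_n - p_n, w - p_n> + |p_n - v| (|w - v| + |x_n - v|)],
   where the first term is nonpositive because [w] lies in [C]. *)
Lemma weak_ulim_eq_proj_lim (U : set_system nat) (p : nat -> V) v w :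
  UltraFilter U -> \oo `<=` U ->
  (forall n, is_metric_proj C (x n) (p n)) -> p n @[n --> \oo] --> v -> C v ->
  weak_ulim ip U x w -> C w -> w = v.
Proof.
move=> U_ultra U_tail xp pv Cv xw Cw.
have [B xB] := fejer_bounded.
pose g n := ip (x n - v) (w - v).
have g_bounded : bounded_seq g.
  exists ((B + `|v|) * `|w - v|) => n; apply: le_trans (cauchy_schwarz ip_inner _ _) _.
  by rewrite ler_wpM2r //; apply: le_trans (ler_normB _ _) _; rewrite lerD2r.
have g_le n : g n <= `|p n - v| * (`|w - v| + (B + `|v|)).
  have e : g n = ip (x n - p n) (w - p n) + ip (p n - v) (w - v)
                 + ip (x n - p n) (p n - v).
    by rewrite /g !(ipBl ip_inner) !(ipBr ip_inner); ring.
  have xpv : `|x n - p n| <= B + `|v|.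
    apply: le_trans (proj2 (xp n) _ Cv) _.
    by apply: le_trans (ler_normB _ _) _; rewrite lerD2r.
  have := metric_proj_variational ip_inner C_convex (xp n) Cw.
  have := ler_norm (ip (p n - v) (w - v)).
  have := cauchy_schwarz ip_inner (p n - v) (w - v).
  have := ler_norm (ip (x n - p n) (p n - v)).
  have := cauchy_schwarz ip_inner (x n - p n) (p n - v).
  have := normr_ge0 (p n - v); rewrite e; nra.
have : ulim U g <= 0.
  apply: (ulim_le0 U_ultra U_tail g_bounded); first exact: nearW g_le.
  rewrite -(mul0r (`|w - v| + (B + `|v|))); apply: cvgM; last exact: cvg_cst.
  by apply/norm_cvg0P; rewrite -(subrr v); apply: cvgB => //; exact: cvg_cst.
have -> : ulim U g = `|w - v| ^+ 2.
  have -> : g = fun n => ip (x n) (w - v) + - ip v (w - v).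
    by apply: funext => n; rewrite /g (ipBl ip_inner).
  rewrite (ulimD U_ultra (bounded_seq_ip ip_inner _ xB)) ?xw; last exact: bounded_seq_cst.
  by rewrite (ulim_cst U_ultra U_tail) -(ipBl ip_inner) -(sqr_norm_ip ip_inner).
by move/sqr_norm_le0/eqP; rewrite subr_eq0 => /eqP.
Qed.

Hypothesis weak_cluster_in : forall U w, UltraFilter U -> \oo `<=` U ->
  weak_ulim ip U x w -> C w.

Lemma fejer_weak_cvg : exists v, C v /\ weak_cvg ip x v /\
  (forall p : nat -> V, (forall n, is_metric_proj C (x n) (p n)) -> p @ \oo --> v).
Proof.
have /choice [p xp] : forall n, exists q, is_metric_proj C (x n) q.
  by move=> n; apply: (metric_proj_exists ip_inner _ C_closed).
have pv : p @ \oo --> lim (p @ \oo) := metric_proj_fejer_cvg xp.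
have Cv : C (lim (p @ \oo)).
  by apply: (@closed_cvg nat V \oo _ p C C_closed _ _ pv); apply: nearW => n; case: (xp n).
exists (lim (p @ \oo)); split=> //; split.
  have [B xB] := fejer_bounded.
  move=> y; apply: cvg_of_ulim (bounded_seq_ip ip_inner y xB) _ => U U_ultra U_tail.
  have [w xw] := weak_ulim_exists ip_inner U_ultra U_tail xB.
  rewrite xw; congr ip; apply: (weak_ulim_eq_proj_lim U_ultra U_tail xp pv Cv xw).
  exact: (weak_cluster_in U_ultra U_tail xw).
move=> p' xp'; suff -> : p' = p by [].
by apply: funext => n; apply: (metric_proj_unique ip_inner C_convex (xp' n) (xp n)).
Qed.

End FejerMonotone.

Section GeneralizedHybrid.
Variables (R : realType) (V : completeNormedModType R) (ip : V -> V -> R).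
Hypothesis ip_inner : is_inner_product ip.
Variables (E : set V) (S : V -> V) (lam gam : R).
Hypothesis S_hybrid : generalized_hybrid E S lam gam.

Lemma hybrid_quasi_nonexpansive q y :
  fixed_points E S q -> E y -> `|S y - q| <= `|y - q|.
Proof.
move=> [Eq Sq] Ey; have := S_hybrid Eq Ey; rewrite Sq !(distrC q) => h.
by rewrite -ler_sqr ?nnegrE //; lra.
Qed.

Lemma fixed_points_closed : closed E -> closed (fixed_points E S).
Proof.
move=> E_closed p Fp.
have Ep : E p by apply: E_closed; apply: closureS Fp => z [].
split => //; apply/eqP; rewrite -subr_eq0 -normr_le0.
apply/ler_addgt0Pr => e e0; rewrite add0r.
have [z [Fz]] := Fp _ (nbhsx_ballx p (e / 2) (divr_gt0 e0 (ltr0Sn _ 1))).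
rewrite -ball_normE /= => pz.
have := hybrid_quasi_nonexpansive Fz Ep.
have : `|S p - p| <= `|S p - z| + `|z - p|.
  by rewrite (_ : S p - p = (S p - z) + (z - p)) ?ler_normD // addrA subrK.
rewrite (distrC z p); lra.
Qed.

(* [|S z - a| <= |z - a|] for fixed points [a], [c], while the squared distances
   from [S z] and [z] to a convex combination of [a] and [c] differ exactly by
   [t (1 - t) |a - c|^2]. *)
Lemma fixed_points_convex : convex_set_in E -> convex_set_in (fixed_points E S).
Proof.
move=> E_convex a c t [Ea Sa] [Ec Sc] t01; have /andP[t0 t1] := t01.
set z := t *: a + (1 - t) *: c.
have Ez : E z by exact: E_convex.
split => //; apply/eqP; rewrite -subr_eq0; apply/eqP/sqr_norm_le0.
have := sqr_norm_convex ip_inner t (a - S z) (c - S z).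
have := sqr_norm_convex ip_inner t (a - z) (c - z).
rewrite !convex_combB !subrBB -/z subrr normr0 expr0n /= (distrC z).
have ha : `|a - S z| ^+ 2 <= `|a - z| ^+ 2.
  by rewrite ler_sqr ?nnegrE // !(distrC a); exact: hybrid_quasi_nonexpansive.
have hc : `|c - S z| ^+ 2 <= `|c - z| ^+ 2.
  by rewrite ler_sqr ?nnegrE // !(distrC c); exact: hybrid_quasi_nonexpansive.
have : t * `|a - S z| ^+ 2 <= t * `|a - z| ^+ 2 by rewrite ler_wpM2l.
have : (1 - t) * `|c - S z| ^+ 2 <= (1 - t) * `|c - z| ^+ 2.
  by rewrite ler_wpM2l // subr_ge0.
lra.
Qed.

Lemma hybrid_sqr_dist_le z w : E z -> E w ->
  `|z - S w| ^+ 2 - `|z - w| ^+ 2 <=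
  gam * (`|S z - z| ^+ 2 + 2 * ip (S z - z) (z - w))
  - lam * (`|S z - z| ^+ 2 + 2 * ip (S z - z) (z - S w)).
Proof.
move=> Ez Ew; have := S_hybrid Ez Ew.
rewrite (sqr_normB_split ip_inner (S z) z (S w)) (sqr_normB_split ip_inner (S z) z w).
lra.
Qed.

(* By [hybrid_sqr_dist_le], [|u_n - S w|^2 - |u_n - w|^2
   = |w - S w|^2 + 2 <u_n - w, w - S w>] is [O(|S u_n - u_n|)];
   its ultralimit is [|w - S w|^2]. *)
Lemma hybrid_demiclosed (U : set_system nat) (u : nat -> V) B w :
  UltraFilter U -> \oo `<=` U -> (forall n, E (u n)) -> (forall n, `|u n| <= B) ->
  E w -> weak_ulim ip U u w -> (fun n => `|S (u n) - u n|) @ \oo --> 0 -> S w = w.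
Proof.
move=> U_ultra U_tail Eu uB Ew uw Su0.
pose D := B + `|w| + `|S w|.
pose K := `|gam| + `|lam|.
pose c n := K * (`|S (u n) - u n| ^+ 2 + 2 * (`|S (u n) - u n| * D)).
pose g n := `|w - S w| ^+ 2 + 2 * ip (u n - w) (w - S w).
have uv n (v : V) : `|u n - v| <= B + `|v|.
  by apply: le_trans (ler_normB _ _) _; rewrite lerD2r.
have e_ip n (v : V) : `|u n - v| <= D ->
    `| `|S (u n) - u n| ^+ 2 + 2 * ip (S (u n) - u n) (u n - v)|
    <= `|S (u n) - u n| ^+ 2 + 2 * (`|S (u n) - u n| * D).
  move=> uvD; apply: le_trans (ler_normD _ _) _.
  rewrite ger0_norm ?sqr_ge0 // lerD2l normrM ger0_norm // ler_pM2l //.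
  by apply: le_trans (cauchy_schwarz ip_inner _ _) _; exact: ler_wpM2l.
have g_le n : g n <= c n.
  have -> : g n = `|u n - S w| ^+ 2 - `|u n - w| ^+ 2.
    by rewrite (sqr_normB_split ip_inner (u n) w (S w)) /g; ring.
  apply: le_trans (hybrid_sqr_dist_le (Eu n) Ew) _.
  have wD : `|u n - w| <= D by apply: le_trans (uv n w) _; rewrite /D lerDl.
  have SwD : `|u n - S w| <= D.
    by apply: le_trans (uv n (S w)) _; rewrite /D -addrA lerD2l lerDr.
  have := e_ip n w wD; have := e_ip n (S w) SwD.
  set X := _ + 2 * ip _ (_ - w); set Y := _ + 2 * ip _ (_ - S w); set Z := _ + _ * _.
  move=> hY hX; rewrite /c /K -/Z mulrDl.
  have := ler_norm (gam * X); have := ler_norm (- (lam * Y)); rewrite normrN !normrM.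
  have : `|gam| * `|X| <= `|gam| * Z by rewrite ler_wpM2l.
  have : `|lam| * `|Y| <= `|lam| * Z by rewrite ler_wpM2l.
  lra.
have g_bounded : bounded_seq g.
  exists (`|w - S w| ^+ 2 + 2 * ((B + `|w|) * `|w - S w|)) => n.
  rewrite /g; apply: le_trans (ler_normD _ _) _.
  rewrite ger0_norm ?sqr_ge0 // lerD2l normrM ger0_norm // ler_pM2l //.
  by apply: le_trans (cauchy_schwarz ip_inner _ _) _; rewrite ler_wpM2r.
have c0 : c n @[n --> \oo] --> 0.
  have -> : (0 : R) = K * (0 ^+ 2 + 2 * (0 * D)) by rewrite expr2 !(mul0r, mulr0, addr0).
  apply: cvgM; first exact: cvg_cst.
  apply: cvgD; first by apply: cvgM.
  by apply: cvgM; [exact: cvg_cst | apply: cvgM => //; exact: cvg_cst].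
have : ulim U g <= 0.
  by apply: (ulim_le0 U_ultra U_tail g_bounded _ c0); exact: nearW.
have -> : ulim U g = `|w - S w| ^+ 2.
  have -> : g = fun n => (`|w - S w| ^+ 2 - 2 * ip w (w - S w)) + 2 * ip (u n) (w - S w).
    by apply: funext => n; rewrite /g (ipBl ip_inner); ring.
  have bu := bounded_seq_ip ip_inner (w - S w) uB.
  rewrite (ulimD U_ultra (bounded_seq_cst _) (bounded_seqZ 2 bu)) (ulimZ U_ultra _ bu).
  by rewrite uw (ulim_cst U_ultra U_tail); ring.
by move=> /sqr_norm_le0/eqP; rewrite subr_eq0 eq_sym => /eqP.
Qed.

End GeneralizedHybrid.

Section Equilibrium.
Variables (R : realType) (V : completeNormedModType R) (ip : V -> V -> R).
Hypothesis ip_inner : is_inner_product ip.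
Variables (E : set V) (f : V -> V -> R).
Hypotheses (E_closed : closed E) (E_convex : convex_set_in E).
Hypotheses (f_A1 : cond_A1 E f) (f_A2 : cond_A2 E f) (f_A3 : cond_A3 E f)
  (f_A4 : cond_A4 E f).

Lemma sublevel_closed y c : E y -> closed [set z | E z /\ f y z <= c].
Proof.
move=> Ey p cp.
have Ep : E p by apply: E_closed; apply: closureS cp => z [].
split => //; rewrite leNgt; apply/negP => cp_lt.
have eps0 : 0 < f y p - c by rewrite subr_gt0.
have [z [[Ez fz] /(_ Ez)]] := cp _ ((f_A4 Ey).2 p Ep _ eps0).
lra.
Qed.

Lemma sublevel_convex y c : E y -> convex_set_in [set z | E z /\ f y z <= c].
Proof.
move=> Ey a b t [Ea fa] [Eb fb] t01; split; first exact: E_convex.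
apply: le_trans ((f_A4 Ey).1 a b t Ea Eb t01) _.
by case/andP: t01 => t0 t1; nra.
Qed.

Lemma EP_monotone z y : EP E f z -> E y -> f y z <= 0.
Proof. by move=> [Ez fz] Ey; have := f_A2 Ez Ey; have := fz y Ey; lra. Qed.

(* Minty's lemma: along the segment from [z] to [y], (A1) and convexity give
   [0 <= t f(y_t, y)], and (A3) lets [t] go to [0]. *)
Lemma EP_minty z : E z -> (forall y, E y -> f y z <= 0) -> EP E f z.
Proof.
move=> Ez fz; split => // y Ey; apply/ler_addgt0Pr => e e0.
have t01 : \forall t \near (0 : R)^'+, 0 < t /\ t < 1.
  by apply: filterI; [exact: nbhs_right_gt | exact: nbhs_right_lt ltr01].
have [t [[t0 t1] fyt]] := filter_ex (filterI t01 (f_A3 Ez Ey Ey e0)).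
set yt := t *: y + (1 - t) *: z in fyt.
have Eyt : E yt by apply: E_convex => //; apply/andP; split; lra.
have t01' : 0 <= t <= 1 by apply/andP; split; lra.
have := (f_A4 Eyt).1 y z t Ey Ez t01'; rewrite -/yt f_A1 // => conv.
have := fz yt Eyt; nra.
Qed.

Lemma EP_closed : closed (EP E f).
Proof.
move=> p cp.
have Ep : E p by apply: E_closed; apply: closureS cp => z [].
apply: EP_minty => // y Ey.
suff [] : [set z | E z /\ f y z <= 0] p by [].
apply: (sublevel_closed (c := 0) Ey); apply: closureS cp => z EPz.
by split; [case: EPz | exact: EP_monotone].
Qed.

Lemma EP_convex : convex_set_in (EP E f).
Proof.
move=> a b t EPa EPb t01.
have Eab : E (t *: a + (1 - t) *: b) by apply: E_convex => //; [case: EPa | case: EPb].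
apply: EP_minty => // y Ey.
suff [] : [set z | E z /\ f y z <= 0] (t *: a + (1 - t) *: b) by [].
by apply: (sublevel_convex (c := 0) Ey) => //; split; try exact: EP_monotone;
  [case: EPa | case: EPb].
Qed.

Definition is_resolvent (r : R) (x u : V) :=
  E u /\ forall y, E y -> 0 <= f u y + r^-1 * ip (y - u) (u - x).

Lemma resolvent_sqr_dist_le r x u q : 0 < r -> is_resolvent r x u -> EP E f q ->
  `|u - q| ^+ 2 <= `|x - q| ^+ 2 - `|u - x| ^+ 2.
Proof.
move=> r0 [Eu fu] [Eq fq].
have : 0 <= r^-1 * ip (q - u) (u - x).
  by have := fu q Eq; have := fq u Eu; have := f_A2 Eu Eq; lra.
rewrite pmulr_rge0 ?invr_gt0 // => ip_ge0.
rewrite (sqr_normB_split ip_inner x u q) (distrC u x).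
rewrite -[u - q]opprB (ipNr ip_inner) -[x - u]opprB (ipNl ip_inner) (ipC ip_inner).
by rewrite normrN; lra.
Qed.

Lemma resolvent_weak_ulim_EP (U : set_system nat) (r : nat -> R) (x u : nat -> V) B k w :
  UltraFilter U -> \oo `<=` U -> 0 < k -> (forall n, 0 < r n) ->
  (\forall n \near \oo, k <= r n) -> (forall n, is_resolvent (r n) (x n) (u n)) ->
  (forall n, `|u n| <= B) -> (fun n => `|u n - x n|) @ \oo --> 0 ->
  weak_ulim ip U u w -> EP E f w.
Proof.
move=> U_ultra U_tail k0 r0 kr ru uB ux0 uw.
have Eu n : E (u n) by case: (ru n).
have Ew : E w.
  apply: (weak_ulim_closed_convex ip_inner U_ultra U_tail E_closed E_convex uB _ uw).
  exact: nearW.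
apply: EP_minty => // y Ey; apply/ler_addgt0Pr => d d0; rewrite add0r.
pose K := k^-1 * (`|y| + B).
have Kux : K * `|u n - x n| @[n --> \oo] --> 0.
  by rewrite -(mulr0 K); apply: cvgM => //; exact: cvg_cst.
have fyu : \forall n \near \oo, E (u n) /\ f y (u n) <= d.
  apply: filterS2 kr (cvgr_lt _ Kux _ d0) => n krn /ltW Kd; split => //.
  have [_ /(_ y Ey) fu] := ru n; have := f_A2 (Eu n) Ey.
  have : (r n)^-1 * ip (y - u n) (u n - x n) <= K * `|u n - x n|.
    apply: le_trans (_ : _ <= (r n)^-1 * (`|y - u n| * `|u n - x n|)) _.
      apply: ler_wpM2l; first by rewrite invr_ge0 ltW.
      exact: le_trans (ler_norm _) (cauchy_schwarz ip_inner _ _).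
    rewrite /K -mulrA.
    apply: le_trans (_ : _ <= k^-1 * (`|y - u n| * `|u n - x n|)) _.
      by rewrite ler_wpM2r ?mulr_ge0 // lef_pV2 ?posrE.
    rewrite ler_wpM2l ?invr_ge0 ?(ltW k0) // ler_wpM2r //.
    by apply: le_trans (ler_normB _ _) _; rewrite lerD2l.
  lra.
by have [] := weak_ulim_closed_convex ip_inner U_ultra U_tail
  (sublevel_closed (c := d) Ey) (sublevel_convex (c := d) Ey) uB fyu uw.
Qed.

End Equilibrium.

Section Iteration.
Variables (R : realType) (V : completeNormedModType R) (ip : V -> V -> R)
  (E : set V) (f : V -> V -> R) (S : V -> V) (lam gam : R) (r beta : nat -> R)
  (b : R) (x0 : V) (x u : nat -> V).
Hypothesis ip_inner : is_inner_product ip.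
Hypotheses (E_closed : closed E) (E_convex : convex_set_in E).
Hypotheses (f_A1 : cond_A1 E f) (f_A2 : cond_A2 E f) (f_A3 : cond_A3 E f)
  (f_A4 : cond_A4 E f).
Hypotheses (S_E : forall y, E y -> E (S y)) (S_hybrid : generalized_hybrid E S lam gam).
Hypothesis C_nonempty : fixed_points E S `&` EP E f !=set0.
Hypotheses (r_gt0 : forall n, 0 < r n) (r_liminf : (0 < limn_einf (fun n => (r n)%:E))%E).
Hypotheses (b01 : 0 < b < 1) (beta_bnd : forall n, b <= beta n <= 1).
Hypothesis beta_liminf : (0 < limn_einf (fun n => (beta n * (1 - beta n))%:E))%E.
Hypotheses (x0_E : E x0) (x_0 : x 0%N = x0).
Hypothesis u_resolvent : forall n, is_resolvent ip E f (r n) (x n) (u n).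
Hypothesis x_succ : forall n, x n.+1 = S ((1 - beta n) *: x n + beta n *: S (u n)).

Let C := fixed_points E S `&` EP E f.

Let b_gt0 : 0 < b. Proof. by case/andP: b01. Qed.

Let beta01 n : 0 <= beta n <= 1.
Proof. by case/andP: (beta_bnd n) => bn ->; rewrite (le_trans (ltW b_gt0) bn). Qed.

Let u_in n : E (u n). Proof. by case: (u_resolvent n). Qed.

Let C_closed : closed C.
Proof.
apply: closedI; first exact: fixed_points_closed S_hybrid E_closed.
exact: EP_closed E_closed E_convex f_A1 f_A2 f_A3 f_A4.
Qed.

Let C_convex : convex_set_in C.
Proof.
move=> a c t [Fa EPa] [Fc EPc] t01; split.
  exact: (fixed_points_convex ip_inner S_hybrid E_convex).
exact: (EP_convex E_convex f_A1 f_A2 f_A3 f_A4).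
Qed.

Lemma iterate_in n : E (x n).
Proof.
elim: n => [|n IH]; first by rewrite x_0.
rewrite x_succ; apply: S_E.
have -> : (1 - beta n) *: x n + beta n *: S (u n)
        = beta n *: S (u n) + (1 - beta n) *: x n by rewrite addrC.
by apply: E_convex; [exact/S_E/u_in | | exact: beta01].
Qed.

Lemma iterate_sqr_dist_le q n : C q ->
  `|x n.+1 - q| ^+ 2 <= `|x n - q| ^+ 2 - beta n * `|u n - x n| ^+ 2
     - beta n * (1 - beta n) * `|x n - S (u n)| ^+ 2.
Proof.
move=> [Fq EPq]; pose y := (1 - beta n) *: x n + beta n *: S (u n).
have Ey : E y.
  rewrite /y addrC.
  by apply: E_convex; [exact/S_E/u_in | exact: iterate_in | exact: beta01].
have xy : `|x n.+1 - q| ^+ 2 <= `|y - q| ^+ 2.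
  by rewrite x_succ -/y ler_sqr ?nnegrE //; apply: (hybrid_quasi_nonexpansive S_hybrid Fq).
have Suq : `|S (u n) - q| ^+ 2 <= `|u n - q| ^+ 2.
  by rewrite ler_sqr ?nnegrE //; apply: (hybrid_quasi_nonexpansive S_hybrid Fq).
have uq := resolvent_sqr_dist_le ip_inner f_A2 (r_gt0 n) (u_resolvent n) EPq.
have := sqr_norm_convex ip_inner (1 - beta n) (x n - q) (S (u n) - q).
rewrite convex_combB subrBB subKr -/y => yq.
have : beta n * `|S (u n) - q| ^+ 2 <= beta n * (`|x n - q| ^+ 2 - `|u n - x n| ^+ 2).
  by rewrite ler_wpM2l ?(le_trans Suq uq) //; case/andP: (beta01 n).
lra.
Qed.

Lemma iterate_fejer q n : C q -> `|x n.+1 - q| <= `|x n - q|.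
Proof.
move=> Cq; rewrite -ler_sqr ?nnegrE //; have := iterate_sqr_dist_le n Cq.
have /andP[b0 b1] := beta01 n.
have : 0 <= beta n * `|u n - x n| ^+ 2 by rewrite mulr_ge0 ?sqr_ge0.
have : 0 <= beta n * (1 - beta n) * `|x n - S (u n)| ^+ 2.
  by rewrite !mulr_ge0 ?sqr_ge0 ?subr_ge0.
lra.
Qed.

Lemma iterate_bounded : exists B, forall n, `|x n| <= B /\ `|u n| <= B.
Proof.
have [q Cq] := C_nonempty; exists (`|x 0%N - q| + `|q|) => n.
have xq := fejer_le iterate_fejer Cq (leq0n n).
have uq : `|u n - q| <= `|x n - q|.
  rewrite -ler_sqr ?nnegrE //; have := sqr_ge0 `|u n - x n|.
  have := resolvent_sqr_dist_le ip_inner f_A2 (r_gt0 n) (u_resolvent n) Cq.2; lra.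
have tri (v : V) : `|v| <= `|v - q| + `|q|.
  by rewrite -{1}(subrK q v) ler_normD.
by split; apply: le_trans (tri _) _; rewrite lerD2r // (le_trans uq).
Qed.

(* Summing the decrease of [|x_n - q|^2] forces both defects to vanish. *)
Lemma iterate_asymptotic :
  (fun n => `|u n - x n|) @ \oo --> 0 /\ (fun n => `|x n - S (u n)|) @ \oo --> 0.
Proof.
have [q Cq] := C_nonempty.
pose d n := `|x n - q| ^+ 2.
have d_noninc : {homo d : n m / (n <= m)%N >-> m <= n}.
  by move=> n m nm; rewrite ler_sqr ?nnegrE //; exact: (fejer_le iterate_fejer Cq nm).
have d_cvg : cvgn d.
  by apply: nonincreasing_is_cvgn => //; exists 0 => _ [n _ <-]; exact: sqr_ge0.
have dd0 k : (d n - d n.+1) * k @[n --> \oo] --> 0.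
  rewrite -(mul0r k) -(subrr (limn d)); apply: cvgM; last exact: cvg_cst.
  by apply: cvgB => //; rewrite (cvg_shiftS d).
have [k k0 kbeta] := limn_einf_gt0_lbound beta_liminf.
split.
  apply: (cvg0_sqr_le _ (dd0 b^-1)) => //; apply: nearW => n.
  rewrite ler_pdivlMr ?b_gt0 // mulrC; have := iterate_sqr_dist_le n Cq.
  have /andP[b0 b1] := beta01 n.
  have : b * `|u n - x n| ^+ 2 <= beta n * `|u n - x n| ^+ 2.
    by rewrite ler_wpM2r ?sqr_ge0 //; case/andP: (beta_bnd n).
  have : 0 <= beta n * (1 - beta n) * `|x n - S (u n)| ^+ 2.
    by rewrite !mulr_ge0 ?sqr_ge0 ?subr_ge0.
  rewrite /d; lra.
apply: (cvg0_sqr_le _ (dd0 k^-1)) => //; apply: filterS kbeta => n kn.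
rewrite ler_pdivlMr // mulrC; have := iterate_sqr_dist_le n Cq.
have /andP[b0 b1] := beta01 n.
have : k * `|x n - S (u n)| ^+ 2 <= beta n * (1 - beta n) * `|x n - S (u n)| ^+ 2.
  by rewrite ler_wpM2r ?sqr_ge0.
have : 0 <= beta n * `|u n - x n| ^+ 2 by rewrite mulr_ge0 ?sqr_ge0.
rewrite /d; lra.
Qed.

Lemma iterate_weak_cluster U w : UltraFilter U -> \oo `<=` U ->
  weak_ulim ip U x w -> C w.
Proof.
move=> U_ultra U_tail xw.
have [B xuB] := iterate_bounded.
have xB n : `|x n| <= B by case: (xuB n).
have uB n : `|u n| <= B by case: (xuB n).
have [ux0 xSu0] := iterate_asymptotic.
have uw := weak_ulim_cvg0 ip_inner U_ultra U_tail xB uB ux0 xw.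
have Ew : E w.
  apply: (weak_ulim_closed_convex ip_inner U_ultra U_tail E_closed E_convex xB _ xw).
  exact: nearW iterate_in.
have Su0 : (fun n => `|S (u n) - u n|) @ \oo --> 0.
  apply: (@cvg0_norm_le _ _ (fun n => `|x n - S (u n)| + `|u n - x n|)).
    by move=> n; rewrite normr_id (distrC (x n)) (distrC (u n)) ler_distD.
  by rewrite -(addr0 0); apply: cvgD.
have [k k0 kr] := limn_einf_gt0_lbound r_liminf.
split; first split => //.
  exact: (hybrid_demiclosed ip_inner S_hybrid U_ultra U_tail u_in uB Ew uw Su0).
exact: (resolvent_weak_ulim_EP ip_inner E_closed E_convex f_A1 f_A2 f_A3 f_A4
  U_ultra U_tail k0 r_gt0 kr u_resolvent uB ux0 uw).
Qed.

Lemma iterate_weak_cvg : exists v, C v /\ weak_cvg ip x v /\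
  (forall p : nat -> V, (forall n, is_metric_proj C (x n) (p n)) -> p @ \oo --> v).
Proof.
exact: (fejer_weak_cvg ip_inner C_closed C_convex C_nonempty iterate_fejer
  iterate_weak_cluster).
Qed.

End Iteration.

Unset Implicit Arguments.

Theorem corollary3p3 (R : realType) (V : completeNormedModType R)
  (ip : V -> V -> R) (E : set V) (f : V -> V -> R) (S : V -> V)
  (lam gam : R) (r beta : nat -> R) (b : R) (x0 : V) (x u : nat -> V) :
  is_inner_product ip ->
  E !=set0 -> closed E -> convex_set_in E ->
  cond_A1 E f -> cond_A2 E f -> cond_A3 E f -> cond_A4 E f ->
  (forall y, E y -> E (S y)) ->
  generalized_hybrid E S lam gam ->
  fixed_points E S `&` EP E f !=set0 ->
  (forall n, 0 < r n) ->
  (0 < limn_einf (fun n => (r n)%:E))%E ->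
  0 < b < 1 ->
  (forall n, b <= beta n <= 1) ->
  (0 < limn_einf (fun n => (beta n * (1 - beta n))%:E))%E ->
  E x0 -> x 0%N = x0 ->
  (forall n, E (u n) /\
     forall y, E y -> 0 <= f (u n) y + (r n)^-1 * ip (y - u n) (u n - x n)) ->
  (forall n, x n.+1 = S ((1 - beta n) *: x n + beta n *: S (u n))) ->
  exists v, (fixed_points E S `&` EP E f) v /\ weak_cvg ip x v /\
    (forall p : nat -> V,
       (forall n, is_metric_proj (fixed_points E S `&` EP E f) (x n) (p n)) ->
       p @ \oo --> v).
Proof.
(* The nonemptiness of [E] is implied by that of [F(S) /\ EP(f)]. *)
move=> ip_inner _ E_closed E_convex f_A1 f_A2 f_A3 f_A4 S_E S_hybrid C_nonempty
  r_gt0 r_liminf b01 beta_bnd beta_liminf x0_E x_0 u_resolvent x_succ.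
exact: (iterate_weak_cvg ip_inner E_closed E_convex f_A1 f_A2 f_A3 f_A4 S_E S_hybrid
  C_nonempty r_gt0 r_liminf b01 beta_bnd beta_liminf x0_E x_0 u_resolvent x_succ).
Qed.
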